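(* For $n\geq 1$, there is a bijection $\pi\mapsto T(\pi)$ from $\mathfrak{S}_n(2413,3142)$ to $\mathfrak{D}\mathfrak{T}_n$ such that for each $i\in[n-1]$, $$\pi_i>\pi_{i+1}\quad\Longleftrightarrow\quad\text{the $i$th node of $T(\pi)$ (in in-order) is labelled } \ominus.$$ Moreover, for $0\leq k \leq \lfloor (n-1)/2 \rfloor$, this map restricts to a bijection between $$\mathfrak{S}_{n,k}^S:= \{\pi \in \mathfrak{S}_n(3142, 2413) : \mathrm{dd}(\pi)=0,\ \mathrm{des}(\pi)=k\}$$ and $$\mathfrak{D}\mathfrak{T}_{n,k}^{2} :=\{T\in\mathfrak{D}\mathfrak{T}_n :\ T \text{ has no two consecutive nodes (in in-order) both labelled } \ominus,\ \text{its first node is labelled }\oplus,\ n_\ominus(T)=k \}.$$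
   Context: $\mathfrak{S}_n(2413,3142)$ is the set of permutations $\pi=\pi_1\cdots\pi_n$ of $[n]$ avoiding the patterns $2413$ and $3142$ (no subsequence has the same relative order as $2413$ or $3142$). With $\pi_0=\pi_{n+1}=+\infty$, $\mathrm{des}(\pi)$ is the number of $i\in[n]$ with $\pi_i>\pi_{i+1}$ and $\mathrm{dd}(\pi)$ is the number of $i\in[n]$ with $\pi_{i-1}>\pi_i>\pi_{i+1}$. A binary tree is either empty or consists of a root together with a left subtree and a right subtree, both binary trees; the root of the left (right) subtree is the left (right) child. Nodes are ordered by in-order: recursively, the left subtree, then the root, then the right subtree. A right chain of a binary tree is a maximal sequence of nodes $v_1,\dots,v_l$ in which $v_1$ is either the root or a left child and each $v_{j+1}$ is the right child of $v_j$; $l$ is its length. A di-sk tree is a binary tree whose nodes are labelled by $\oplus$ or $\ominus$ such that along every right chain the labels alternate. $\mathfrak{D}\mathfrak{T}_n$ is the set of di-sk trees with $n-1$ nodes (for $n=1$ only the empty tree), and $n_\ominus(T)$ is the number of nodes of $T$ labelled $\ominus$. *)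

From mathcomp Require Import all_boot all_fingroup.
Set Implicit Arguments. Unset Strict Implicit. Unset Printing Implicit Defensive.

Definition ominus : bool := true.
Definition oplus : bool := false.

Inductive btree : Type := Leaf | Node of btree & bool & btree.

Fixpoint bsize (t : btree) : nat :=
  match t with Leaf => 0 | Node l _ r => bsize l + 1 + bsize r end.

Fixpoint inorder (t : btree) : seq bool :=
  match t with Leaf => [::] | Node l b r => inorder l ++ b :: inorder r end.

Fixpoint rspine (t : btree) : seq bool :=
  match t with Leaf => [::] | Node _ b r => b :: rspine r end.

Fixpoint lchains (t : btree) : seq (seq bool) :=
  match t with
  | Leaf => [::]
  | Node l _ r =>
      (if l is Node _ _ _ then [:: rspine l] else [::]) ++ lchains l ++ lchains r
  end.

(* all right chains of t (label sequences), one per node that is the root or a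
   left child *)
Definition right_chains (t : btree) : seq (seq bool) :=
  (if t is Node _ _ _ then [:: rspine t] else [::]) ++ lchains t.

Definition alternating (c : seq bool) : bool := sorted (fun a b : bool => a != b) c.

Definition is_disk (t : btree) : bool := all alternating (right_chains t).

Definition DT (n : nat) (t : btree) : Prop := is_disk t /\ bsize t = n.-1.

Definition n_ominus (t : btree) : nat := count (fun b => b == ominus) (inorder t).

Definition DT2 (n k : nat) (t : btree) : Prop :=
  DT n t /\
  (forall i, i.+1 < size (inorder t) ->
     ~ (nth oplus (inorder t) i = ominus /\ nth oplus (inorder t) i.+1 = ominus)) /\
  (forall b, ohead (inorder t) = Some b -> b = oplus) /\
  n_ominus t = k.

(* one-line notation pi_1 ... pi_n with values in [n] (1-based) *)
Definition pseq (n : nat) (s : 'S_n) : seq nat := [seq (s i).+1 | i <- enum 'I_n].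

Definition order_iso (u v : seq nat) : Prop :=
  size u = size v /\
  forall i j, i < size u -> j < size u ->
    (nth 0 u i < nth 0 u j) = (nth 0 v i < nth 0 v j).

Definition contains (w p : seq nat) : Prop :=
  exists u, subseq u w /\ order_iso u p.

Definition sep_avoid (n : nat) (s : 'S_n) : Prop :=
  ~ contains (pseq s) [:: 2; 4; 1; 3] /\ ~ contains (pseq s) [:: 3; 1; 4; 2].

(* w padded with pi_0 = pi_{n+1} = +infinity (a value larger than all entries) *)
Definition ext (w : seq nat) : seq nat :=
  let M := (foldr maxn 0 w).+1 in M :: rcons w M.

Definition des (w : seq nat) : nat :=
  let e := ext w in
  count (fun i => nth 0 e i > nth 0 e i.+1) (iota 1 (size w)).

Definition dd (w : seq nat) : nat :=
  let e := ext w in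
  count (fun i => (nth 0 e i.-1 > nth 0 e i) && (nth 0 e i > nth 0 e i.+1))
        (iota 1 (size w)).

Definition SS (n k : nat) (s : 'S_n) : Prop :=
  sep_avoid s /\ dd (pseq s) = 0 /\ des (pseq s) = k.

(* A binary tree with labelled nodes encodes a permutation word: a leaf is the
   word 1, and a node labelled oplus (resp. ominus) is the direct (resp. skew) sum
   of the words of its subtrees.  The label of a node is then exactly the
   comparison between the two entries straddling the junction of its blocks, so
   the in-order labels are the descents of the word.  Since 2413 and 3142 are
   simple permutations, a word avoids both iff it keeps splitting into two blocks
   separated in value; hence the avoiders are exactly the words of trees.  Direct
   and skew sums are associative, and the alternation condition on right chains
   fixes the bracketing, so every avoider is the word of exactly one di-sk tree.
   The sentinels pi_0 = pi_(n+1) = +oo turn the statistics des and dd into the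
   number of ominus nodes and the number of adjacent ominus pairs in the in-order
   word prefixed by an ominus. *)

From mathcomp Require Import all_boot all_fingroup zify.
From Stdlib Require Import ClassicalEpsilon.
Set Implicit Arguments. Unset Strict Implicit. Unset Printing Implicit Defensive.

Definition dsum (u v : seq nat) : seq nat := u ++ map (addn (size u)) v.
Definition ssum (u v : seq nat) : seq nat := map (addn (size v)) u ++ v.
Definition bsum (b : bool) : seq nat -> seq nat -> seq nat := if b then ssum else dsum.

Definition ordb (b : bool) (x y : nat) : bool := if b then y < x else x < y.

Definition separated (b : bool) (u v : seq nat) : Prop :=
  {in u & v, forall x y, ordb b x y}.

Definition standard (w : seq nat) : Prop := perm_eq w (iota 1 (size w)).

Definition descent (w : seq nat) (i : nat) : bool := nth 0 w i.+1 < nth 0 w i.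

Definition ends_ordb (b : bool) (w : seq nat) : bool :=
  ordb b (nth 0 w 0) (nth 0 w (size w).-1).

Lemma ordbN b x y : ordb (~~ b) x y = ordb b y x.
Proof. by case: b. Qed.

Lemma ordb_trans b y x z : ordb b x y -> ordb b y z -> ordb b x z.
Proof. by case: b => /=; lia. Qed.

Lemma ordb_total b x y : x != y -> ~~ ordb b x y -> ordb b y x.
Proof. by case: b => /=; lia. Qed.

Lemma ordb_asym b x y : ordb b x y -> ordb b y x = false.
Proof. by case: b => /=; lia. Qed.

Lemma ends_ordbN b w : ends_ordb b w -> ~~ ends_ordb (~~ b) w.
Proof. by rewrite /ends_ordb ordbN => /ordb_asym ->. Qed.

Lemma size_bsum b u v : size (bsum b u v) = size u + size v.
Proof. by case: b; rewrite /= /ssum /dsum size_cat size_map. Qed.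

Lemma nth_bsum b u v i : i < size u + size v ->
  nth 0 (bsum b u v) i =
  if i < size u then (if b then size v else 0) + nth 0 u i
  else (if b then 0 else size u) + nth 0 v (i - size u).
Proof.
move=> lti; case: b; rewrite /= /ssum /dsum nth_cat ?size_map;
  case: ifP => ltiu //; rewrite (nth_map 0) //; lia.
Qed.

Lemma bsum_assoc b u v w : bsum b (bsum b u v) w = bsum b u (bsum b v w).
Proof.
case: b; rewrite /= /ssum /dsum !size_cat !size_map map_cat -!map_comp -!catA;
  congr (_ ++ _ ++ _); apply: eq_map => x /=; lia.
Qed.

Lemma bsum_inj b u1 v1 u2 v2 : size u1 = size u2 ->
  bsum b u1 v1 = bsum b u2 v2 -> u1 = u2 /\ v1 = v2.
Proof.
move=> eq_u eq_w; have := congr1 size eq_w; rewrite !size_bsum => eq_v.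
have {}eq_v : size v1 = size v2 by lia.
move/eqP: eq_w; case: b; rewrite /= /ssum /dsum eqseq_cat ?size_map //.
- by rewrite eq_v => /andP [/eqP/(inj_map (@addnI _)) -> /eqP ->].
- by rewrite eq_u => /andP [/eqP -> /eqP/(inj_map (@addnI _)) ->].
Qed.

Lemma mem_standard w x : standard w -> x \in w -> 0 < x <= size w.
Proof. by move=> sw; rewrite (perm_mem sw) mem_iota; lia. Qed.

Lemma nth_standard w i : standard w -> i < size w -> 0 < nth 0 w i <= size w.
Proof. by move=> sw ltiw; apply: mem_standard sw (mem_nth 0 ltiw). Qed.

Lemma standard_uniq w : standard w -> uniq w.
Proof. by move=> sw; rewrite (perm_uniq sw) iota_uniq. Qed.

Lemma standard_bsum b u v : standard u -> standard v -> standard (bsum b u v).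
Proof.
rewrite /standard size_bsum => su sv; case: b => /=.
- by rewrite perm_catC addnC iotaD perm_cat // -addnC iotaDl perm_map.
- by rewrite iotaD perm_cat // -addnC iotaDl perm_map.
Qed.

Lemma perm_iota_range s a : uniq s -> {in s, forall x, a < x <= a + size s} ->
  perm_eq s (iota a.+1 (size s)).
Proof.
move=> us range_s.
have sub_s : {subset s <= iota a.+1 (size s)}.
  by move=> x /range_s; rewrite mem_iota; lia.
have [|_ eq_s] := uniq_min_size us sub_s; first by rewrite size_iota.
by apply: uniq_perm; rewrite ?iota_uniq.
Qed.

Lemma perm_iota_shift s a : perm_eq s (iota a.+1 (size s)) ->
  exists2 s', s = map (addn a) s' & standard s'.
Proof.
move=> ps; exists (map (subn^~ a) s).
  rewrite -map_comp -[LHS]map_id; apply/eq_in_map => x /=.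
  by rewrite (perm_mem ps) mem_iota; lia.
rewrite /standard size_map.
have <- : map (subn^~ a) (iota a.+1 (size s)) = iota 1 (size s).
  by rewrite -addn1 iotaDl -map_comp -[RHS]map_id; apply: eq_map => x /=; lia.
exact: perm_map.
Qed.

Lemma standard_cat_lt u v : standard (u ++ v) -> {in u & v, forall x y, x < y} ->
  standard u /\ exists2 v', v = map (addn (size u)) v' & standard v'.
Proof.
rewrite /standard size_cat => suv lt_uv.
have : uniq (u ++ v) by rewrite (perm_uniq suv) iota_uniq.
rewrite cat_uniq => /and3P [uu disj_uv uv].
have mem_uv y : (y \in u ++ v) = (0 < y <= size u + size v).
  by rewrite (perm_mem suv) mem_iota; apply/idP/idP; lia.
have su : standard u.
  apply: (perm_iota_range (a := 0)) => // x xu.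
  have := mem_uv x; rewrite mem_cat xu => /esym /andP [x_gt0 x_le].
  rewrite x_gt0 /= -[x](size_iota 1); apply: (uniq_leq_size (iota_uniq 1 x)) => y.
  rewrite mem_iota => /andP [y_gt0 ltyx].
  have : y \in u ++ v by rewrite mem_uv; lia.
  by rewrite mem_cat => /orP [// | /(lt_uv x y xu)]; lia.
split=> //; apply: perm_iota_shift; apply: perm_iota_range => // y yv.
have := mem_uv y; rewrite mem_cat yv orbT => /esym /andP [y_gt0 y_le].
rewrite y_le andbT ltnNge; apply/negP => y_le_u.
move/hasPn: disj_uv => /(_ y yv) /=.
by rewrite (perm_mem su) mem_iota; lia.
Qed.

Lemma standard_split b u v : standard (u ++ v) -> separated b u v ->
  exists u' v', [/\ u ++ v = bsum b u' v', standard u', standard v',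
                    size u' = size u & size v' = size v].
Proof.
case: b => suv sep_uv.
- have svu : standard (v ++ u) by rewrite /standard perm_catC size_cat addnC -size_cat.
  have [sv [u' def_u su']] := standard_cat_lt svu (fun y x yv xu => sep_uv x y xu yv).
  by exists u', v; rewrite def_u size_map.
- have [su [v' def_v sv']] := standard_cat_lt suv sep_uv.
  by exists u, v'; rewrite def_v size_map.
Qed.

Lemma descent_bsum b u v i : standard u -> standard v -> i.+1 < size u + size v ->
  descent (bsum b u v) i =
  if i.+1 < size u then descent u i else if i < size u then b else descent v (i - size u).
Proof.
move=> su sv lti; rewrite /descent !nth_bsum; try lia.
case: (ltngtP i.+1 (size u)) => [_ | ltui | eqiu]; first by rewrite ltn_add2l.
  by rewrite subSn ?ltn_add2l.
have lt_iu : i < size u by rewrite -eqiu.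
have v_gt0 : 0 < size v by lia.
move: (nth_standard su lt_iu) (nth_standard sv v_gt0).
by rewrite -eqiu subnn; case: b; lia.
Qed.

Lemma bsum_cut b u1 v1 u2 v2 :
  standard u1 -> standard v1 -> standard u2 -> standard v2 -> 0 < size v2 ->
  bsum b u1 v1 = bsum b u2 v2 -> size u1 < size u2 ->
  ends_ordb b v1.
Proof.
move=> su1 sv1 su2 sv2 v2_gt0 eq_w lt_u.
have := congr1 size eq_w; rewrite !size_bsum => eq_size.
have lt_v1 : 1 < size v1 by lia.
have := congr1 (nth 0 ^~ (size u1)) eq_w.
have := congr1 (nth 0 ^~ (size u1 + size v1).-1) eq_w.
rewrite /= !nth_bsum; try lia.
rewrite ltnn subnn lt_u.
have -> : ((size u1 + size v1).-1 < size u1) = false by lia.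
have -> : ((size u1 + size v1).-1 < size u2) = false by lia.
have -> : (size u1 + size v1).-1 - size u1 = (size v1).-1 by lia.
move: (nth_standard su2 lt_u) (nth_standard sv1 (ltnW lt_v1)).
have : (size v1).-1 < size v1 by lia.
have : (size u1 + size v1).-1 - size u2 < size v2 by lia.
move=> /(nth_standard sv2) + /(nth_standard sv1).
by rewrite /ends_ordb; clear eq_w; case: b => /=; lia.
Qed.

Fixpoint word_of_tree (t : btree) : seq nat :=
  if t is Node l b r then bsum b (word_of_tree l) (word_of_tree r) else [:: 1].

Definition root_label (t : btree) : option bool :=
  if t is Node _ b _ then Some b else None.

Lemma size_word_of_tree t : size (word_of_tree t) = (bsize t).+1.
Proof. by elim: t => [|l IHl b r IHr] //=; rewrite size_bsum IHl IHr; lia. Qed.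

Lemma standard_word_of_tree t : standard (word_of_tree t).
Proof. by elim: t => [|l IHl b r IHr] //=; apply: standard_bsum. Qed.

Lemma size_inorder t : size (inorder t) = bsize t.
Proof. by elim: t => [|l IHl b r IHr] //=; rewrite size_cat /= IHl IHr; lia. Qed.

Lemma descent_word_of_tree t i :
  i < bsize t -> descent (word_of_tree t) i = nth false (inorder t) i.
Proof.
elim: t i => [|l IHl b r IHr] i //= lti.
rewrite (descent_bsum _ (standard_word_of_tree l) (standard_word_of_tree r));
  rewrite !size_word_of_tree; last lia.
rewrite nth_cat size_inorder !ltnS.
case: (ltngtP i (bsize l)) => [ltil | ltli | ->]; first exact: IHl.
  have -> : i - bsize l = (i - (bsize l).+1).+1 by lia.
  by rewrite /= IHr //; lia.
by rewrite subnn.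
Qed.

Lemma is_disk_node l b r :
  is_disk (Node l b r) = [&& is_disk l, is_disk r & root_label r != Some b].
Proof.
have disk_spine t : is_disk t = alternating (rspine t) && all alternating (lchains t).
  by case: t.
rewrite disk_spine [is_disk r]disk_spine.
have -> : lchains (Node l b r) = right_chains l ++ lchains r by rewrite /right_chains -catA.
have -> : alternating (rspine (Node l b r)) =
          (root_label r != Some b) && alternating (rspine r).
  by case: r => [|? c ?] //; rewrite /alternating /=; case: b; case: c.
rewrite all_cat -/(is_disk l).
by case: (is_disk l); case: (_ != _); case: (alternating (rspine r)); rewrite /= ?andbT ?andbF.
Qed.

Lemma ends_ordb_node l b r : ends_ordb b (word_of_tree (Node l b r)).
Proof.
rewrite /ends_ordb /=; set wl := word_of_tree l; set wr := word_of_tree r.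
have sl : standard wl := standard_word_of_tree l.
have sr : standard wr := standard_word_of_tree r.
have size_l : size wl = (bsize l).+1 := size_word_of_tree l.
have size_r : size wr = (bsize r).+1 := size_word_of_tree r.
have l_gt0 : 0 < size wl by rewrite size_l.
have last_r : (size wl + size wr).-1 - size wl < size wr by lia.
rewrite size_bsum !nth_bsum ?l_gt0; try lia.
have -> : ((size wl + size wr).-1 < size wl) = false by lia.
move: (nth_standard sl l_gt0) (nth_standard sr last_r).
by case: b => /=; lia.
Qed.

Lemma ends_ordb_root b t : root_label t != Some b -> ~~ ends_ordb b (word_of_tree t).
Proof.
case: t => [|l c r] /= neq_cb; first by case: b {neq_cb}.
have -> : b = ~~ c by case: b c neq_cb => [] [].
exact: ends_ordbN (ends_ordb_node l c r).
Qed.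

Lemma word_of_tree_inj t1 t2 : is_disk t1 -> is_disk t2 ->
  word_of_tree t1 = word_of_tree t2 -> t1 = t2.
Proof.
elim: t1 t2 => [|l1 IHl b1 r1 IHr] [|l2 b2 r2] //;
  try by move=> _ _ /(congr1 size); rewrite !size_word_of_tree /=; lia.
rewrite !is_disk_node => /and3P [dl1 dr1 root1] /and3P [dl2 dr2 root2] eq_w.
have eq_b : b1 = b2.
  apply: contraTeq (ends_ordb_node l1 b1 r1) => neq_b; rewrite eq_w.
  have -> : b1 = ~~ b2 by case: b1 b2 neq_b {root1 root2 eq_w} => [] [].
  exact: ends_ordbN (ends_ordb_node l2 b2 r2).
subst b2; move: eq_w.
(* The root label of a right subtree differs from [b1], so its word is not itself a
   [b1]-sum; this pins down where the word of the node splits. *)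
have no_cut u1 v1 u2 v2 : root_label v1 != Some b1 ->
  word_of_tree (Node u1 b1 v1) = word_of_tree (Node u2 b1 v2) ->
  size (word_of_tree u1) < size (word_of_tree u2) -> False.
  move=> root_v1 eq_w lt_u.
  have ends_v1 := bsum_cut (standard_word_of_tree u1) (standard_word_of_tree v1)
    (standard_word_of_tree u2) (standard_word_of_tree v2)
    (ltac:(by rewrite size_word_of_tree)) eq_w lt_u.
  by move: (ends_ordb_root root_v1); rewrite ends_v1.
case: (ltngtP (size (word_of_tree l1)) (size (word_of_tree l2))) => [lt_l|lt_l|eq_l] eq_w.
- by case: (no_cut _ _ _ _ root1 eq_w lt_l).
- by case: (no_cut _ _ _ _ root2 (esym eq_w) lt_l).
by have [/IHl -> // /IHr ->] := bsum_inj eq_l eq_w.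
Qed.

Fixpoint graft (b : bool) (x y : btree) : btree :=
  match y with
  | Node l c r => if c == b then Node (graft b x l) b r else Node x b y
  | Leaf => Node x b Leaf
  end.

Lemma word_of_tree_graft b x y :
  word_of_tree (graft b x y) = bsum b (word_of_tree x) (word_of_tree y).
Proof.
elim: y => [|l IHl c r _] //=.
by case: eqP => [-> | _] //=; rewrite IHl bsum_assoc.
Qed.

Lemma is_disk_graft b x y : is_disk x -> is_disk y -> is_disk (graft b x y).
Proof.
move=> dx; elim: y => [|l IHl c r _]; first by rewrite [graft _ _ _]/= is_disk_node dx.
rewrite [graft _ _ _]/= is_disk_node => /and3P [dl dr root_r].
case: eqP => [eq_cb | /eqP neq_cb]; rewrite is_disk_node.
  by rewrite IHl // dr -eq_cb.
by rewrite dx is_disk_node dl dr root_r; case: b c neq_cb {root_r IHl} => [] [].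
Qed.

Definition p2413 : seq nat := [:: 2; 4; 1; 3].
Definition p3142 : seq nat := [:: 3; 1; 4; 2].

Definition avoid (w : seq nat) : Prop := ~ contains w p2413 /\ ~ contains w p3142.

Lemma contains_subseq w w' p : subseq w w' -> contains w p -> contains w' p.
Proof. by move=> sub_w [u [sub_u iso_u]]; exists u; split; first exact: subseq_trans sub_w. Qed.

Lemma avoid_subseq w w' : subseq w w' -> avoid w' -> avoid w.
Proof. by move=> sub_w [no1 no2]; split=> /(contains_subseq sub_w). Qed.

Lemma order_iso_shift k u p : order_iso (map (addn k) u) p <-> order_iso u p.
Proof.
rewrite /order_iso size_map; split=> -[eq_size iso_u]; split=> // i j lti ltj;
  by rewrite -iso_u // !(nth_map 0) // ltn_add2l.
Qed.

Lemma contains_shift k w p : contains (map (addn k) w) p <-> contains w p.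
Proof.
split=> [[u [/subseqP [m size_m ->] iso_u]] | [u [sub_u iso_u]]].
  exists (mask m w); split; first exact: mask_subseq.
  by apply/(order_iso_shift k); rewrite map_mask.
by exists (map (addn k) u); split; [exact: map_subseq | apply/order_iso_shift].
Qed.

Lemma avoid_shift k w : avoid (map (addn k) w) <-> avoid w.
Proof. by rewrite /avoid !contains_shift. Qed.

Lemma ordb_iso b u p i j : order_iso u p -> i < size u -> j < size u ->
  ordb b (nth 0 u i) (nth 0 u j) = ordb b (nth 0 p i) (nth 0 p j).
Proof. by case=> _ iso_u lti ltj; case: b; rewrite /= iso_u. Qed.

(* 2413 and 3142 are simple permutations; the witnesses are found by computation. *)
Lemma simple_pattern b p k : p \in [:: p2413; p3142] -> 0 < k < 4 ->
  exists i j, [/\ i < k, k <= j < 4 & ~~ ordb b (nth 0 p i) (nth 0 p j)].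
Proof.
move=> pat_p lt_k.
have : has (fun i => has (fun j => ~~ ordb b (nth 0 p i) (nth 0 p j)) (iota k (4 - k)))
           (iota 0 k).
  by move: pat_p; rewrite !inE => /orP [] /eqP ->; case: b; case: k lt_k => [|[|[|[|]]]].
case/hasP=> i; rewrite mem_iota => lt_ik /hasP [j]; rewrite mem_iota => lt_kj nord.
by exists i, j; split=> //; lia.
Qed.

Lemma order_iso_separated b p x1 x2 : p \in [:: p2413; p3142] ->
  order_iso (x1 ++ x2) p -> separated b x1 x2 -> x1 = [::] \/ x2 = [::].
Proof.
move=> pat_p iso_x sep_x.
case: x1 iso_x sep_x => [|a1 s1]; [by left | case: x2 => [|a2 s2]; [by right|]].
set x1 := a1 :: s1; set x2 := a2 :: s2 => iso_x sep_x; exfalso.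
have [x1_gt0 x2_gt0] : 0 < size x1 /\ 0 < size x2 by [].
have size_p : size p = 4 by move: pat_p; rewrite !inE => /orP [] /eqP ->.
have size_x : size x1 + size x2 = 4 by rewrite -size_p -size_cat; case: iso_x.
have [|i [j [lt_i /andP [le_j lt_j] nord]]] := simple_pattern b pat_p (k := size x1).
  lia.
have [lt_i4 lt_j4] : i < size (x1 ++ x2) /\ j < size (x1 ++ x2) by rewrite size_cat; lia.
rewrite -(ordb_iso _ iso_x lt_i4 lt_j4) !nth_cat lt_i ltnNge le_j /= in nord.
have lt_j' : j - size x1 < size x2 by lia.
by rewrite sep_x ?mem_nth in nord.
Qed.

Lemma contains_cat b u v p : p \in [:: p2413; p3142] -> separated b u v ->
  contains (u ++ v) p -> contains u p \/ contains v p.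
Proof.
move=> pat_p sep_uv [x [/subseqP [m size_m def_x] iso_x]].
rewrite -[m](cat_take_drop (size u)) mask_cat in def_x; last first.
  by rewrite size_takel // size_m size_cat leq_addr.
set x1 := mask _ u in def_x; set x2 := mask _ v in def_x.
have sub1 : subseq x1 u := mask_subseq _ _.
have sub2 : subseq x2 v := mask_subseq _ _.
have sep_x : separated b x1 x2.
  by move=> y z y1 z2; apply: sep_uv; [exact: (mem_subseq sub1) | exact: (mem_subseq sub2)].
rewrite def_x in iso_x.
case: (order_iso_separated pat_p iso_x sep_x) => empty.
- by right; exists x2; split=> //; rewrite empty in iso_x.
- by left; exists x1; split=> //; rewrite empty cats0 in iso_x.
Qed.

Lemma avoid_cat b u v : separated b u v -> avoid u -> avoid v -> avoid (u ++ v).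
Proof.
move=> sep_uv [u1 u2] [v1 v2].
by split=> /(contains_cat _ sep_uv) []; rewrite ?inE ?eqxx ?orbT.
Qed.

Lemma separated_bsum b u v : standard u -> standard v ->
  separated b (if b then map (addn (size v)) u else u)
              (if b then v else map (addn (size u)) v).
Proof.
move=> su sv; case: b => x y.
- by case/mapP=> x' /(mem_standard su) ? -> /(mem_standard sv); rewrite /=; lia.
- by move=> /(mem_standard su) ? /mapP [y' /(mem_standard sv) ? ->]; rewrite /=; lia.
Qed.

Lemma avoid_bsum b u v : standard u -> standard v ->
  avoid (bsum b u v) <-> avoid u /\ avoid v.
Proof.
move=> su sv; have sep := @separated_bsum b u v su sv.
split.
- case: b sep => /= _ av; split.
  + by apply/(avoid_shift (size v)); apply: avoid_subseq av; exact: prefix_subseq.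
  + by apply: avoid_subseq av; exact: suffix_subseq.
  + by apply: avoid_subseq av; exact: prefix_subseq.
  + by apply/(avoid_shift (size u)); apply: avoid_subseq av; exact: suffix_subseq.
- case=> au av; case: b sep => /= sep; apply: (avoid_cat sep) => //; exact/avoid_shift.
Qed.

Lemma avoid_word_of_tree t : avoid (word_of_tree t).
Proof.
elim: t => [|l IHl b r IHr].
  by split=> -[u [/size_subseq + [size_u _]]]; rewrite size_u.
exact/(avoid_bsum _ (standard_word_of_tree l) (standard_word_of_tree r)).
Qed.

Lemma prefix_or_inversion (q : pred nat) (s : seq nat) :
  (exists s1 s2, [/\ s = s1 ++ s2, all q s1 & all (predC q) s2]) \/
  (exists s0 a s1 a', [/\ s = s0 ++ a :: s1, ~~ q a, a' \in s1 & q a']).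
Proof.
elim: s => [|y s [[s1 [s2 [-> all1 all2]]] | [s0 [a [s1 [a' [-> na a's1 qa']]]]]]].
- by left; exists [::], [::].
- case qy: (q y); first by left; exists (y :: s1), s2; rewrite /= qy.
  case: s1 all1 => [|z s1] all1; first by left; exists [::], (y :: s2); rewrite /= qy.
  by right; exists [::], y, (z :: s1 ++ s2), z; rewrite qy mem_head; case/andP: all1.
- by right; exists (y :: s0), a, s1, a'.
Qed.

Lemma order_iso_witness b a a' c x : ordb b a' x -> ordb b x a -> ordb b a c ->
  order_iso [:: a; a'; c; x] (if b then p2413 else p3142).
Proof.
move=> h1 h2 h3; split; first by case: b {h1 h2 h3}.
by case: b h1 h2 h3 => /= h1 h2 h3 [|[|[|[|i]]]] [|[|[|[|j]]]] //= _ _; lia.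
Qed.

Lemma subseq_witness (s0 s1 s2 : seq nat) (a a' c x : nat) : a' \in s1 ->
  subseq [:: a; a'; c; x] (rcons (s0 ++ a :: s1 ++ c :: s2) x).
Proof.
move=> a's1.
have sub_aa' : subseq [:: a; a'] (s0 ++ a :: s1).
  by rewrite -[[:: a; a']]cat0s; apply: cat_subseq (sub0seq s0) _; rewrite /= eqxx sub1seq.
have sub_cx : subseq [:: c; x] (rcons (c :: s2) x).
  by rewrite /= eqxx sub1seq mem_rcons mem_head.
have -> : rcons (s0 ++ a :: s1 ++ c :: s2) x = (s0 ++ a :: s1) ++ rcons (c :: s2) x.
  by rewrite -catA rcons_cat /= rcons_cat.
exact: cat_subseq sub_aa' sub_cx.
Qed.

Definition splits (w : seq nat) : Prop :=
  exists b u v, [/\ w = u ++ v, u != [::], v != [::] & separated b u v].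

(* For a split A | B of w: if x lies beyond all of A, then (A ++ B) | x splits the
   other way; otherwise A = A1 ++ A2 with A1 before x and A2 beyond x, and A1 splits
   off, unless some a beyond x precedes some a' before x in A, in which case
   a a' c x (with c the head of B) is a forbidden pattern. *)
Lemma splits_rcons w x : x \notin w -> avoid (rcons w x) -> splits w -> splits (rcons w x).
Proof.
move=> xw av_wx [b [A [B [def_w nA nB sep_AB]]]]; subst w.
case: B nB sep_AB xw av_wx => [|c B] // _ sep_AB xw av_wx.
have [a0 a0A] : exists a0, a0 \in A.
  by case: A nA {sep_AB xw av_wx} => // a0 A _; exists a0; rewrite mem_head.
have ordb_x y : y \in A -> ~~ ordb b y x -> ordb b x y.
  by move=> yA; apply: ordb_total; apply: contraNneq xw => <-; rewrite mem_cat yA.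
have [all_x | /allPn [e eA x_e]] := boolP (all (ordb b x) A).
  exists (~~ b), (A ++ c :: B), [:: x]; split; rewrite ?cats1 //.
    by rewrite -size_eq0 size_cat addnS.
  move=> y _ /[1!mem_cat] yAB /[1!inE] /eqP ->; rewrite ordbN.
  case/orP: yAB => [yA | yB]; first exact: (allP all_x).
  exact: ordb_trans (allP all_x a0 a0A) (sep_AB a0 y a0A yB).
have e_x : ordb b e x.
  by apply: ordb_total x_e; apply: contraNneq xw => ->; rewrite mem_cat eA.
case: (prefix_or_inversion (ordb b ^~ x) A).
- move=> [A1 [A2 [defA all1 all2]]].
  exists b, A1, (A2 ++ rcons (c :: B) x); split.
  + by rewrite defA -catA !rcons_cat.
  + apply/eqP => A1nil; move: all2.
    by rewrite -(cat0s A2) -A1nil -defA => /allP /(_ e eA); rewrite /= e_x.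
  + by case: A2 {defA all2}.
  + have A_A1 y : y \in A1 -> y \in A by rewrite defA mem_cat => ->.
    move=> y z yA1; rewrite mem_cat mem_rcons inE => /or3P [zA2 | /eqP -> | zcB].
    * have zA : z \in A by rewrite defA mem_cat zA2 orbT.
      exact: ordb_trans (allP all1 y yA1) (ordb_x z zA (allP all2 z zA2)).
    * exact: (allP all1).
    * exact: sep_AB (A_A1 y yA1) zcB.
- move=> [A0 [a [A1 [a' [defA not_ax a'A1 a'_x]]]]].
  have aA : a \in A by rewrite defA mem_cat mem_head orbT.
  have : contains (rcons (A ++ c :: B) x) (if b then p2413 else p3142).
    exists [:: a; a'; c; x]; split; first by rewrite defA -catA; exact: subseq_witness.
    by apply: order_iso_witness => //; [exact: ordb_x | exact: sep_AB (mem_head c B)].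
  by case: av_wx; case: (b).
Qed.

Lemma avoid_splits w : uniq w -> 1 < size w -> avoid w -> splits w.
Proof.
elim/last_ind: w => [|w x IHw] //; rewrite rcons_uniq size_rcons => /andP [xw uw] gt1 av.
have [gt1w | le1w] := ltnP 1 (size w).
  apply: splits_rcons => //; apply: IHw => //.
  exact: avoid_subseq (subseq_rcons w x) av.
case: w {IHw uw av} xw gt1 le1w => [|y [|]] // xw _ _.
exists (x < y), [:: y], [:: x]; split=> // _ _ /[1!inE] /eqP -> /[1!inE] /eqP ->.
by move: xw; rewrite inE; case: (ltngtP x y).
Qed.

Lemma word_of_tree_onto w : standard w -> avoid w -> 0 < size w ->
  exists2 t, is_disk t & word_of_tree t = w.
Proof.
have [m] := ubnP (size w); elim: m w => // m IHm w lt_wm sw av w_gt0.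
have [gt1 | le1] := ltnP 1 (size w); last first.
  exists Leaf => //; case: w sw {lt_wm av} w_gt0 le1 => [|y [|]] // sw _ _.
  by have := mem_standard sw (mem_head y [::]); case: y {sw} => [|[|y]].
have [b [u [v [def_w nu nv sep_uv]]]] := avoid_splits (standard_uniq sw) gt1 av.
subst w; have [u' [v' [eq_w su' sv' size_u size_v]]] := standard_split sw sep_uv.
rewrite eq_w in av *; have [avu avv] := (avoid_bsum _ su' sv').1 av.
rewrite size_cat in lt_wm.
have u'_gt0 : 0 < size u' by rewrite size_u lt0n size_eq0.
have v'_gt0 : 0 < size v' by rewrite size_v lt0n size_eq0.
have [tu du <-] := IHm u' (ltac:(lia)) su' avu u'_gt0.
have [tv dv <-] := IHm v' (ltac:(lia)) sv' avv v'_gt0.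
by exists (graft b tu tv); rewrite ?is_disk_graft ?word_of_tree_graft.
Qed.

Definition tree_of_word (w : seq nat) : btree :=
  epsilon (inhabits Leaf) (fun t => is_disk t /\ word_of_tree t = w).

Lemma tree_of_wordK w : standard w -> avoid w -> 0 < size w ->
  is_disk (tree_of_word w) /\ word_of_tree (tree_of_word w) = w.
Proof.
move=> sw av w_gt0; have [t dt wt] := word_of_tree_onto sw av w_gt0.
by apply: (epsilon_spec (inhabits Leaf) (fun t => is_disk t /\ word_of_tree t = w)); exists t.
Qed.

Lemma size_pseq n (s : 'S_n) : size (pseq s) = n.
Proof. by rewrite size_map size_enum_ord. Qed.

Lemma standard_pseq n (s : 'S_n) : standard (pseq s).
Proof.
apply: (perm_iota_range (a := 0)).
  by rewrite map_inj_uniq ?enum_uniq // => i j /succn_inj /val_inj /perm_inj.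
by move=> _ /mapP [i _ ->]; rewrite size_pseq ltn_ord.
Qed.

Lemma pseq_inj n (s1 s2 : 'S_n) : pseq s1 = pseq s2 -> s1 = s2.
Proof.
move=> /eq_in_map eq_s; apply/permP => i.
by have /(_ (mem_enum _ i)) [/val_inj] := eq_s i.
Qed.

Lemma pseq_onto n w : standard w -> size w = n -> exists s : 'S_n, pseq s = w.
Proof.
move=> sw size_w.
have nth_w (i : 'I_n) : 0 < nth 0 w i <= n.
  by have := nth_standard sw (_ : nat_of_ord i < size w); rewrite size_w; apply.
have ltw (i : 'I_n) : (nth 0 w i).-1 < n by have := nth_w i; lia.
have inj_f : injective (fun i => Ordinal (ltw i)).
  move=> i j /(congr1 val) /= eq_ij; apply/val_inj/eqP.
  have [lti ltj] : i < size w /\ j < size w by rewrite size_w.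
  have : nth 0 w i = nth 0 w j by move: (nth_w i) (nth_w j); lia.
  by move/eqP; rewrite nth_uniq // standard_uniq.
exists (perm inj_f); rewrite -[RHS](mkseq_nth 0) size_w /mkseq -val_enum_ord -map_comp.
by apply: eq_map => i; rewrite permE /=; have := nth_w i; lia.
Qed.

Lemma leq_foldr_max (w : seq nat) x : x \in w -> x <= foldr maxn 0 w.
Proof. by elim: w => //= y w IHw; rewrite inE => /orP [/eqP -> | /IHw]; lia. Qed.

Section PaddedDescents.

Variables (w : seq nat) (d : seq bool).
Hypothesis size_w : size w = (size d).+1.
Hypothesis descent_w : forall j, j < size d -> descent w j = nth false d j.

Let e := true :: rcons d false.

(* The sentinels [pi_0 = pi_(n+1) = +oo] add a descent in front and an ascent at the end. *)
Lemma descent_ext i : i <= size w -> descent (ext w) i = nth false e i.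
Proof.
have max_w j : j < size w -> nth 0 w j <= foldr maxn 0 w.
  by move=> ltj; apply/leq_foldr_max/mem_nth.
case: i => [|i] le_iw; rewrite /descent /ext /= !nth_rcons size_w.
  by rewrite ltn0Sn; have := max_w 0; rewrite size_w => /(_ isT); lia.
case: (ltngtP i (size d)) => [lt_id | lt_di | ->]; last first.
- by rewrite ltnSn ltnn eqxx; have := max_w (size d); rewrite size_w => /(_ (ltnSn _)); lia.
- by exfalso; move: le_iw; rewrite size_w; lia.
- by rewrite !ltnS lt_id (ltnW lt_id) -descent_w.
Qed.

Lemma des_padded : des w = count id d.
Proof.
have -> : des w = count (nth false e) (iota 1 (size w)).
  by apply: eq_in_count => i; rewrite mem_iota => lti; rewrite -descent_ext //; lia.
rewrite -[1]/(1 + 0) iotaDl count_map size_w -(size_rcons d false).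
have -> : count id d = count id (rcons d false) by rewrite -cats1 count_cat addn0.
by rewrite -[in RHS](mkseq_nth false (rcons d false)) count_map.
Qed.

Lemma dd_padded : dd w = 0 <-> sorted (fun a c => ~~ (a && c)) e.
Proof.
have -> : dd w = count (fun i => nth false e i && nth false e i.+1) (iota 0 (size w)).
  rewrite /dd -[1]/(1 + 0) iotaDl count_map; apply: eq_in_count => i.
  rewrite mem_iota => lti /=; rewrite add1n /=.
  change (descent (ext w) i && descent (ext w) i.+1 = nth false e i && nth false e i.+1).
  by rewrite !descent_ext //; lia.
rewrite (rwP eqP) eqn0Ngt -has_count -all_predC.
split=> [/allP nand_e | /(sortedP false) nand_e].
  apply/(sortedP false) => i; rewrite /e /= size_rcons => lti.
  by apply: nand_e; rewrite mem_iota; lia.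
apply/allP => i; rewrite mem_iota => lti.
by apply: nand_e; rewrite /e /= size_rcons; lia.
Qed.

End PaddedDescents.

Lemma sorted_nand_padded (d : seq bool) :
  sorted (fun a c => ~~ (a && c)) (true :: rcons d false) =
  ~~ head false d && sorted (fun a c => ~~ (a && c)) d.
Proof. by rewrite /= rcons_path andbF andbT; case: d. Qed.

Lemma sorted_nandP (d : seq bool) :
  reflect (forall i, i.+1 < size d -> ~ (nth false d i /\ nth false d i.+1))
          (sorted (fun a c => ~~ (a && c)) d).
Proof.
apply: (iffP (sortedP false)) => nand_d i /nand_d; first by move=> /negP nand /andP.
by move=> nand; apply/negP => /andP.
Qed.

Lemma SS_DT2 n k (s : 'S_n) t : is_disk t -> word_of_tree t = pseq s ->
  SS k s <-> DT2 n k t.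
Proof.
move=> dt wt.
have size_w : size (pseq s) = (size (inorder t)).+1.
  by rewrite -wt size_word_of_tree size_inorder.
have desc_w j : j < size (inorder t) -> descent (pseq s) j = nth false (inorder t) j.
  by rewrite -wt size_inorder; exact: descent_word_of_tree.
have av : sep_avoid s by move: (avoid_word_of_tree t); rewrite wt.
have bs : bsize t = n.-1 by rewrite -(size_pseq s) -wt size_word_of_tree.
have n_t : n_ominus t = count id (inorder t) by apply: eq_count => b; rewrite eqb_id.
rewrite /SS /DT2 /DT (des_padded size_w desc_w) (dd_padded size_w desc_w).
rewrite sorted_nand_padded n_t -(rwP andP) -(rwP (sorted_nandP _)).
have -> : (forall b, ohead (inorder t) = Some b -> b = oplus) <-> ~~ head false (inorder t).
  case: (inorder t) => [|[] d]; split=> //=.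
  - by move=> /(_ true erefl).
  - by move=> _ _ [<-].
by split=> [[_ [[? ?] ?]] | [_ [? [? ?]]]].
Qed.

Theorem theorem2p15 (n : nat) (hn : 1 <= n) :
  exists T : 'S_n -> btree,
    (* T maps S_n(2413,3142) into DT_n ... *)
    (forall s, sep_avoid s -> DT n (T s)) /\
    (* ... injectively ... *)
    (forall s1 s2, sep_avoid s1 -> sep_avoid s2 -> T s1 = T s2 -> s1 = s2) /\
    (* ... and onto DT_n *)
    (forall t, DT n t -> exists2 s, sep_avoid s & T s = t) /\
    (* descents correspond to ominus labels in in-order *)
    (forall s, sep_avoid s -> forall i, 1 <= i <= n.-1 ->
       (nth 0 (pseq s) i.-1 > nth 0 (pseq s) i <->
        nth oplus (inorder (T s)) i.-1 = ominus)) /\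
    (* restriction to a bijection S^S_{n,k} -> DT^2_{n,k} *)
    (forall k, k <= n.-1./2 ->
       forall s, sep_avoid s -> (SS k s <-> DT2 n k (T s))).
Proof.
pose T (s : 'S_n) := tree_of_word (pseq s).
have T_spec s : sep_avoid s -> is_disk (T s) /\ word_of_tree (T s) = pseq s.
  by move=> av; apply: (tree_of_wordK (standard_pseq s) av); rewrite size_pseq.
have bsize_T s : sep_avoid s -> bsize (T s) = n.-1.
  by case/T_spec=> _ /(congr1 size); rewrite size_word_of_tree size_pseq => <-.
exists T; split; [|split; [|split; [|split]]].
- by move=> s av; split; [case: (T_spec s av) | exact: bsize_T].
- move=> s1 s2 /T_spec [_ w1] /T_spec [_ w2] eq_T.
  by apply: pseq_inj; rewrite -w1 -w2 eq_T.
- move=> t [dt bt].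
  have [|s ws] := pseq_onto (standard_word_of_tree t) (n := n).
    by rewrite size_word_of_tree bt; lia.
  have av : sep_avoid s by rewrite /sep_avoid ws; exact: avoid_word_of_tree.
  exists s => //; have [dT wT] := T_spec s av.
  by apply: word_of_tree_inj; rewrite ?wT.
- move=> s av [//|i] /andP [_ lt_in] /=.
  have [_ wT] := T_spec s av.
  by rewrite -wT -[_ < _]/(descent _ i) descent_word_of_tree ?bsize_T.
- by move=> k _ s av; have [dT wT] := T_spec s av; exact: SS_DT2.
Qed.
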